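(* Let $d\ge2$ and let $k$ be a positive integer. For each $x\in[0,1)$ fix the binary expansion $x=\sum_{j\ge1}a_j^x2^{-j}$ that does not end in infinitely many $1$'s, and for $x=1$ use $a_j^1=1$ for all $j$. Define $\phi(x)=\sum_{j\ge1}2a_j^x3^{-d(j-1)}$ and $\Phi(x_1,\ldots,x_d)=\sum_{p=1}^d3^{-p}\phi(x_p)$; $\Phi$ is injective on $[0,1]^d$. For $\ell\in\{0,\ldots,2^k-2\}$ let $I_\ell=[\ell2^{-k},(\ell+1)2^{-k})$ and let $I_{2^k-1}=[1-2^{-k},1]$. Suppose $f:[0,1]^d\to\mathbb{R}$ is constant on each of the $2^{kd}$ sets $I_{\ell_1}\times\cdots\times I_{\ell_d}$, $\ell_1,\ldots,\ell_d\in\{0,\ldots,2^k-1\}$. Then $g:=f\circ\Phi^{-1}:\Phi([0,1]^d)\to\mathbb{R}$ is Lipschitz with $$|g(x)-g(y)|\le 2\|f\|_\infty3^{kd}|x-y|\qquad\text{for all }x,y\in\Phi([0,1]^d),$$ where $\|f\|_\infty=\sup_{\mathbf x\in[0,1]^d}|f(\mathbf x)|$. *)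

From Stdlib Require Import Reals Lra Lia ZArith.
From Coquelicot Require Import Coquelicot.
Open Scope R_scope.

(* Points of [0,1]^d are represented as x : nat -> R, coordinates x 1, ..., x d. *)
Definition in_cube (d : nat) (x : nat -> R) : Prop :=
  forall p : nat, (1 <= p <= d)%nat -> 0 <= x p <= 1.

(* j-th binary digit (j >= 1) of x: for x in [0,1) the digit of the expansion
   not ending in infinitely many 1's, i.e. floor(2^j x) mod 2; for x = 1 all digits are 1. *)
Definition bdigit (x : R) (j : nat) : R :=
  if Req_EM_T x 1 then 1
  else if Z.odd (Int_part (2 ^ j * x)) then 1 else 0.

Definition phi (d : nat) (x : R) : R :=
  Series (fun n : nat => 2 * bdigit x (S n) * (/ 3) ^ (d * n)).

Definition Phi (d : nat) (x : nat -> R) : R :=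
  sum_n_m (fun p : nat => (/ 3) ^ p * phi d (x p)) 1 d.

Definition in_I (k l : nat) (t : R) : Prop :=
  if (l <? 2 ^ k - 1)%nat
  then INR l / 2 ^ k <= t < (INR l + 1) / 2 ^ k
  else (l = 2 ^ k - 1)%nat /\ 1 - / 2 ^ k <= t <= 1.

Definition piecewise_const_dyadic (d k : nat) (f : (nat -> R) -> R) : Prop :=
  forall ls : nat -> nat,
    (forall p, (1 <= p <= d)%nat -> (ls p < 2 ^ k)%nat) ->
    exists c : R, forall x : nat -> R, in_cube d x ->
      (forall p, (1 <= p <= d)%nat -> in_I k (ls p) (x p)) -> f x = c.

Definition sup_norm (d : nat) (f : (nat -> R) -> R) : R :=
  real (Lub_Rbar (fun r : R => exists x, in_cube d x /\ r = Rabs (f x))).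

From Stdlib Require Import Reals Lra Lia ZArith Classical.
From Coquelicot Require Import Coquelicot.
Open Scope R_scope.

(* Phi interleaves the binary digits of the d coordinates into
   one ternary expansion with digits in {0,2}: digit a_(N+1) of coordinate p
   sits at position d N + p.  The proof has three ingredients.
   1. Dyadic cells: the index [cell k t] of the interval I_l containing t is the
      binary number formed by the first k digits of t.  Hence two points whose
      coordinates share their first k digits lie in one box, where f is constant.
   2. Boundedness: f takes at most 2^(kd) values on the cube, so |f| is bounded
      there by its sup norm.
   3. The ternary gap: if the first differing digit (scanning levels N and then
      coordinates p) is at position d N + p0 <= k d, then, as for the Cantor set,
      |Phi x - Phi y| >= 3^-(d N + p0) >= 3^-(k d).
   The theorem follows: either f x = f y, or |f x - f y| <= 2 ||f|| while
   3^(k d) |Phi x - Phi y| >= 1. *)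

Lemma Int_part_uniq (r : R) (z : Z) : IZR z <= r < IZR z + 1 -> Int_part r = z.
Proof.
  intros [H1 H2]. destruct (base_Int_part r) as [H3 H4].
  assert (A : (z - Int_part r < 1)%Z) by (apply lt_IZR; rewrite minus_IZR; lra).
  assert (B : (Int_part r - z < 1)%Z) by (apply lt_IZR; rewrite minus_IZR; lra).
  lia.
Qed.

Lemma bdigit_cases (t : R) (j : nat) : bdigit t j = 0 \/ bdigit t j = 1.
Proof. unfold bdigit. destruct (Req_EM_T t 1); [auto|]. destruct (Z.odd _); auto. Qed.

Lemma pow2_pos (k : nat) : 0 < 2 ^ k.
Proof. apply pow_lt; lra. Qed.

Lemma pow2_nat_ge1 (k : nat) : (1 <= 2 ^ k)%nat.
Proof. assert (H := Nat.pow_nonzero 2 k). lia. Qed.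

Lemma INR_pow2 (k : nat) : INR (2 ^ k) = 2 ^ k.
Proof. rewrite pow_INR. reflexivity. Qed.

Fixpoint binary_prefix (t : R) (j : nat) : R :=
  match j with
  | O => 0
  | S j' => 2 * binary_prefix t j' + bdigit t (S j')
  end.

Lemma binary_prefix_one (j : nat) : binary_prefix 1 j = 2 ^ j - 1.
Proof.
  induction j as [|j IH]; simpl; [lra|]. rewrite IH. unfold bdigit.
  destruct (Req_EM_T 1 1); [lra|congruence].
Qed.

Lemma binary_prefix_floor (t : R) (j : nat) :
  0 <= t < 1 -> binary_prefix t j = IZR (Int_part (2 ^ j * t)).
Proof.
  intros Ht. induction j as [|j IH].
  - simpl. rewrite (Int_part_uniq (1 * t) 0); simpl; lra.
  - simpl binary_prefix. rewrite IH. unfold bdigit.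
    destruct (Req_EM_T t 1) as [Et|Nt]; [lra|].
    set (n := Int_part (2 ^ j * t)). set (m := Int_part (2 ^ S j * t)).
    destruct (base_Int_part (2 ^ j * t)) as [H1 H2].
    destruct (base_Int_part (2 ^ S j * t)) as [H3 H4].
    fold n in H1, H2. fold m in H3, H4.
    replace (2 ^ S j * t) with (2 * (2 ^ j * t)) in H3, H4 by (simpl; ring).
    assert (A : (m < 2 * n + 2)%Z) by (apply lt_IZR; rewrite plus_IZR, mult_IZR; simpl; lra).
    assert (B : (2 * n < m + 1)%Z) by (apply lt_IZR; rewrite plus_IZR, mult_IZR; simpl; lra).
    assert (C : m = (2 * n)%Z \/ m = (2 * n + 1)%Z) by lia.
    destruct C as [-> | ->].
    + rewrite Z.odd_mul, mult_IZR. simpl. lra.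
    + rewrite Z.odd_add, Z.odd_mul, plus_IZR, mult_IZR. simpl. lra.
Qed.

Lemma binary_prefix_ext (t s : R) (j : nat) :
  (forall i, (1 <= i <= j)%nat -> bdigit t i = bdigit s i) ->
  binary_prefix t j = binary_prefix s j.
Proof.
  induction j as [|j IH]; intros H; simpl; [reflexivity|].
  rewrite IH by (intros; apply H; lia). rewrite (H (S j)) by lia. reflexivity.
Qed.

Section DyadicCell.
Variable k : nat.

(* The index l of the interval I_l containing t in [0,1]. *)
Definition cell (t : R) : nat :=
  if Req_EM_T t 1 then (2 ^ k - 1)%nat else Z.to_nat (Int_part (2 ^ k * t)).

Lemma INR_cell (t : R) : 0 <= t <= 1 -> INR (cell t) = binary_prefix t k.
Proof.
  intros Ht. unfold cell. destruct (Req_EM_T t 1) as [->|ne].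
  - rewrite binary_prefix_one, minus_INR, INR_pow2 by apply pow2_nat_ge1. simpl. lra.
  - rewrite binary_prefix_floor by lra. rewrite INR_IZR_INZ, Z2Nat.id; [reflexivity|].
    destruct (base_Int_part (2 ^ k * t)) as [H1 H2].
    assert (0 <= 2 ^ k * t) by (apply Rmult_le_pos; [left; apply pow2_pos|lra]).
    assert (A : (-1 < Int_part (2 ^ k * t))%Z) by (apply lt_IZR; simpl; lra). lia.
Qed.

Lemma cell_bounds (t : R) : 0 <= t <= 1 ->
  (t = 1 /\ INR (cell t) = 2 ^ k - 1) \/
  (t < 1 /\ INR (cell t) <= 2 ^ k * t < INR (cell t) + 1).
Proof.
  intros Ht. rewrite INR_cell by lra. destruct (Req_EM_T t 1) as [->|ne].
  - left. rewrite binary_prefix_one. lra.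
  - right. rewrite binary_prefix_floor by lra. destruct (base_Int_part (2 ^ k * t)). lra.
Qed.

Lemma cell_lt (t : R) : 0 <= t <= 1 -> (cell t < 2 ^ k)%nat.
Proof.
  intros Ht. apply INR_lt. rewrite INR_pow2.
  destruct (cell_bounds t Ht) as [[_ H]|[H1 [H2 H3]]]; [lra|].
  assert (2 ^ k * t < 2 ^ k * 1) by (apply Rmult_lt_compat_l; [apply pow2_pos|lra]). lra.
Qed.

Lemma cell_in_I (t : R) : 0 <= t <= 1 -> in_I k (cell t) t.
Proof.
  intros Ht. assert (Hl := cell_lt t Ht). assert (P := pow2_pos k).
  assert (P1 := pow2_nat_ge1 k).
  unfold in_I. destruct (Nat.ltb_spec (cell t) (2 ^ k - 1)) as [L|L].
  - destruct (cell_bounds t Ht) as [[_ H]|[H1 [H2 H3]]].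
    + apply lt_INR in L. rewrite minus_INR, INR_pow2 in L by lia. simpl in L. lra.
    + split; [apply Rmult_le_reg_l with (2 ^ k) | apply Rmult_lt_reg_l with (2 ^ k)];
        try lra; field_simplify; lra.
  - split; [lia|]. assert (E : cell t = (2 ^ k - 1)%nat) by lia.
    assert (0 < / 2 ^ k) by (apply Rinv_0_lt_compat; lra).
    destruct (cell_bounds t Ht) as [[-> _]|[H1 [H2 H3]]]; [lra|].
    rewrite E, minus_INR, INR_pow2 in H2 by lia. simpl in H2. split; [|lra].
    apply Rmult_le_reg_l with (2 ^ k); [lra|]. field_simplify; lra.
Qed.

Lemma cell_ext (t s : R) : 0 <= t <= 1 -> 0 <= s <= 1 ->
  (forall i, (1 <= i <= k)%nat -> bdigit t i = bdigit s i) -> cell t = cell s.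
Proof.
  intros Ht Hs H. apply INR_eq. rewrite !INR_cell by assumption.
  apply binary_prefix_ext; assumption.
Qed.

Lemma cell_left_end (l : nat) :
  (l < 2 ^ k)%nat -> 0 <= INR l / 2 ^ k <= 1 /\ in_I k l (INR l / 2 ^ k).
Proof.
  intros Hl. assert (P := pow2_pos k). assert (P1 := pow2_nat_ge1 k).
  assert (Hl' : INR l + 1 <= 2 ^ k) by (rewrite <- INR_pow2, <- S_INR; apply le_INR; lia).
  assert (0 <= INR l) by apply pos_INR.
  split.
  - split; [apply Rmult_le_pos; [lra|left; apply Rinv_0_lt_compat; lra]|].
    apply Rmult_le_reg_l with (2 ^ k); [lra|]. field_simplify; lra.
  - unfold in_I. destruct (Nat.ltb_spec l (2 ^ k - 1)) as [L|L].
    + split; [lra|]. apply Rmult_lt_reg_l with (2 ^ k); [lra|]. field_simplify; lra.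
    + split; [lia|]. assert (E : l = (2 ^ k - 1)%nat) by lia.
      rewrite E, minus_INR, INR_pow2 by lia. simpl. split; [right; field; lra|].
      apply Rmult_le_reg_l with (2 ^ k); [lra|]. field_simplify; lra.
Qed.
End DyadicCell.

Lemma common_bound (M : nat) (P : nat -> R -> Prop) :
  (forall v B B', P v B -> B <= B' -> P v B') ->
  (forall v, (v < M)%nat -> exists B, P v B) ->
  exists B, forall v, (v < M)%nat -> P v B.
Proof.
  intros Hmono. induction M as [|M IH]; intros H.
  - exists 0. intros; lia.
  - destruct IH as [B1 HB1]; [intros; apply H; lia|].
    destruct (H M) as [B2 HB2]; [lia|].
    exists (Rmax B1 B2). intros v Hv. destruct (Nat.eq_dec v M) as [->|ne].
    + apply (Hmono M B2); [assumption|apply Rmax_r].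
    + apply (Hmono v B1); [apply HB1; lia|apply Rmax_l].
Qed.

Definition upd (L : nat -> nat) (n v : nat) : nat -> nat :=
  fun p => if Nat.eqb p n then v else L p.

Lemma finite_index_bound (N n : nat) (G : (nat -> nat) -> R) :
  (forall L L', (forall p, (1 <= p <= n)%nat -> (L p < N)%nat) ->
     (forall p, (1 <= p <= n)%nat -> L p = L' p) -> G L = G L') ->
  exists B, forall L, (forall p, (1 <= p <= n)%nat -> (L p < N)%nat) -> Rabs (G L) <= B.
Proof.
  revert G. induction n as [|n IH]; intros G HG.
  - exists (Rabs (G (fun _ => 0%nat))). intros L _.
    rewrite (HG L (fun _ => 0%nat)) by (intros; lia). lra.
  - set (P := fun v B => forall L, (forall p, (1 <= p <= n)%nat -> (L p < N)%nat) ->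
                                    Rabs (G (upd L (S n) v)) <= B).
    destruct (common_bound N P) as [B HB].
    + intros v B B' HPB HBB' L HL. specialize (HPB L HL). lra.
    + intros v Hv. apply IH. intros L L' H1 H2. apply HG.
      * intros p Hp. unfold upd. destruct (Nat.eqb_spec p (S n)); [lia|apply H1; lia].
      * intros p Hp. unfold upd. destruct (Nat.eqb_spec p (S n)); [reflexivity|apply H2; lia].
    + exists B. intros L HL.
      rewrite (HG L (upd L (S n) (L (S n)))); [|assumption|].
      * apply (HB (L (S n))); [apply HL; lia|]. intros p Hp. apply HL. lia.
      * intros p Hp. unfold upd. destruct (Nat.eqb_spec p (S n)); [subst|]; reflexivity.
Qed.

Lemma sup_norm_ge (d : nat) (f : (nat -> R) -> R) :
  (exists B, forall x, in_cube d x -> Rabs (f x) <= B) ->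
  forall x, in_cube d x -> Rabs (f x) <= sup_norm d f.
Proof.
  intros [B HB] x Hx. unfold sup_norm.
  set (E := fun r : R => exists x, in_cube d x /\ r = Rabs (f x)).
  destruct (Lub_Rbar_correct E) as [Hub Hleast].
  assert (H1 : Rbar_le (Rabs (f x)) (Lub_Rbar E)) by (apply Hub; exists x; auto).
  assert (H2 : Rbar_le (Lub_Rbar E) B).
  { apply Hleast. intros r [z [Hz ->]]. apply HB; auto. }
  destruct (Lub_Rbar E); simpl in *; tauto.
Qed.

Section PiecewiseConstant.
Variables d k : nat.
Variable f : (nat -> R) -> R.
Hypothesis hf : piecewise_const_dyadic d k f.

Lemma box_value_eq (L : nat -> nat) (z w : nat -> R) :
  (forall p, (1 <= p <= d)%nat -> (L p < 2 ^ k)%nat) ->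
  in_cube d z -> in_cube d w ->
  (forall p, (1 <= p <= d)%nat -> in_I k (L p) (z p)) ->
  (forall p, (1 <= p <= d)%nat -> in_I k (L p) (w p)) -> f z = f w.
Proof.
  intros HL Hz Hw Iz Iw. destruct (hf L HL) as [c Hc].
  rewrite (Hc z Hz Iz), (Hc w Hw Iw). reflexivity.
Qed.

Lemma same_digits_same_value (x y : nat -> R) :
  in_cube d x -> in_cube d y ->
  (forall p, (1 <= p <= d)%nat -> forall j, (1 <= j <= k)%nat ->
     bdigit (x p) j = bdigit (y p) j) -> f x = f y.
Proof.
  intros hx hy Heq. apply (box_value_eq (fun p => cell k (x p))); auto.
  - intros p Hp. apply cell_lt, hx, Hp.
  - intros p Hp. apply cell_in_I, hx, Hp.
  - intros p Hp. rewrite (cell_ext k (x p) (y p)) by (apply hx || apply hy || apply Heq; auto).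
    apply cell_in_I, hy, Hp.
Qed.

(* f takes finitely many values on the cube, hence is bounded there by its sup norm. *)
Lemma piecewise_const_bounded : forall z, in_cube d z -> Rabs (f z) <= sup_norm d f.
Proof.
  apply sup_norm_ge.
  set (rep := fun (L : nat -> nat) (p : nat) => INR (L p) / 2 ^ k).
  assert (Hrep : forall L, (forall p, (1 <= p <= d)%nat -> (L p < 2 ^ k)%nat) ->
            in_cube d (rep L) /\ forall p, (1 <= p <= d)%nat -> in_I k (L p) (rep L p)).
  { intros L HL. split; intros p Hp; apply cell_left_end; auto. }
  destruct (finite_index_bound (2 ^ k) d (fun L => f (rep L))) as [B HB].
  - intros L L' H1 H2. destruct (Hrep L H1) as [A1 A2].
    apply (box_value_eq L); auto.
    + intros p Hp. unfold rep. rewrite <- H2 by assumption. apply A1, Hp.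
    + intros p Hp. unfold rep. rewrite <- H2 by assumption. apply A2, Hp.
  - exists B. intros z Hz.
    set (L := fun p => cell k (z p)).
    assert (HL : forall p, (1 <= p <= d)%nat -> (L p < 2 ^ k)%nat)
      by (intros p Hp; apply cell_lt, Hz, Hp).
    destruct (Hrep L HL) as [A1 A2].
    rewrite (box_value_eq L z (rep L)); auto.
    intros p Hp. apply cell_in_I, Hz, Hp.
Qed.
End PiecewiseConstant.

Lemma ex_series_geom_scal (c q : R) : 0 <= q < 1 -> ex_series (fun n => c * q ^ n).
Proof.
  intros Hq. apply (ex_series_scal_l c (fun n => q ^ n)). apply ex_series_geom.
  rewrite Rabs_pos_eq; lra.
Qed.

Lemma dominated_series_bound (a : nat -> R) (c q : R) : 0 <= q < 1 ->
  (forall n, Rabs (a n) <= c * q ^ n) -> ex_series a /\ Rabs (Series a) <= c / (1 - q).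
Proof.
  intros Hq H. assert (Eg := ex_series_geom_scal c q Hq).
  assert (Ea : ex_series (fun n => Rabs (a n))).
  { apply (@ex_series_le R_AbsRing R_CompleteNormedModule _ (fun n => c * q ^ n)); [|exact Eg].
    intros n. change (Rabs (Rabs (a n)) <= c * q ^ n). rewrite Rabs_Rabsolu. apply H. }
  split.
  - apply (@ex_series_le R_AbsRing R_CompleteNormedModule _ (fun n => c * q ^ n)); [|exact Eg].
    exact H.
  - eapply Rle_trans; [apply Series_Rabs, Ea|].
    eapply Rle_trans; [apply (Series_le _ (fun n => c * q ^ n)); [|exact Eg]|].
    + intros n; split; [apply Rabs_pos|apply H].
    + rewrite Series_scal_l, Series_geom by (rewrite Rabs_pos_eq; lra). unfold Rdiv. lra.
Qed.

Lemma series_tail_bound (q : R) (N : nat) : 0 <= q < 1 -> forall (a : nat -> R) (c : R),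
  (forall n, Rabs (a n) <= c * q ^ n) -> (forall n, (n < N)%nat -> a n = 0) ->
  Rabs (Series a - a N) <= c * q ^ (S N) / (1 - q).
Proof.
  intros Hq. induction N as [|N IH]; intros a c Ha Hz;
    (rewrite Series_incr_1 by (apply (dominated_series_bound a c q); auto));
    assert (Hs : forall n, Rabs (a (S n)) <= c * q * q ^ n)
      by (intros n; rewrite Rmult_assoc; apply Ha).
  - replace (a 0%nat + Series (fun n => a (S n)) - a 0%nat)
      with (Series (fun n => a (S n))) by ring.
    replace (c * q ^ 1) with (c * q) by ring.
    apply (dominated_series_bound _ _ _ Hq Hs).
  - rewrite Hz, Rplus_0_l by lia.
    replace (c * q ^ S (S N)) with (c * q * q ^ S N) by (simpl; ring).
    apply (IH (fun n => a (S n))); [exact Hs|]. intros n Hn. apply Hz. lia.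
Qed.

(* Coquelicot's finite-sum lemmas, specialised to R so that they rewrite
   terms built with Rplus and Rmult. *)
Lemma sR_Chasles (F : nat -> R) (n m l : nat) : (n <= S m)%nat -> (m <= l)%nat ->
  @eq R (sum_n_m F n l) (sum_n_m F n m + sum_n_m F (S m) l).
Proof. exact (@sum_n_m_Chasles R_AbelianMonoid F n m l). Qed.

Lemma sR_Sn (F : nat -> R) (n m : nat) : (n <= m)%nat ->
  @eq R (sum_n_m F n m) (F n + sum_n_m F (S n) m).
Proof. exact (@sum_Sn_m R_AbelianMonoid F n m). Qed.

Lemma sR_nS (F : nat -> R) (n m : nat) : (n <= S m)%nat ->
  @eq R (sum_n_m F n (S m)) (sum_n_m F n m + F (S m)).
Proof. exact (@sum_n_Sm R_AbelianMonoid F n m). Qed.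

Lemma sR_empty (F : nat -> R) (n m : nat) : (m < n)%nat -> @eq R (sum_n_m F n m) 0.
Proof. exact (@sum_n_m_zero R_AbelianMonoid F n m). Qed.

Lemma sR_plus (F G : nat -> R) (n m : nat) :
  @eq R (sum_n_m (fun p => F p + G p) n m) (sum_n_m F n m + sum_n_m G n m).
Proof. exact (@sum_n_m_plus R_AbelianMonoid F G n m). Qed.

Lemma sR_scal (c : R) (F : nat -> R) (n m : nat) :
  @eq R (sum_n_m (fun p => c * F p) n m) (c * sum_n_m F n m).
Proof. exact (@sum_n_m_mult_l R_Ring c F n m). Qed.

Lemma sR_minus (F G : nat -> R) (n m : nat) :
  @eq R (sum_n_m (fun p => F p - G p) n m) (sum_n_m F n m - sum_n_m G n m).
Proof.
  rewrite (sum_n_m_ext _ (fun p => F p + (-1) * G p)) by (intros; simpl; ring).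
  rewrite sR_plus, sR_scal. ring.
Qed.

Lemma sR_abs (F : nat -> R) (n m : nat) :
  Rabs (sum_n_m F n m) <= sum_n_m (fun p => Rabs (F p)) n m.
Proof. exact (@norm_sum_n_m R_AbsRing R_NormedModule F n m). Qed.

Lemma sR_le (F G : nat -> R) (n m : nat) : (forall p, (n <= p <= m)%nat -> F p <= G p) ->
  sum_n_m F n m <= sum_n_m G n m.
Proof.
  intros H. rewrite (sum_n_m_ext_loc F (fun p => Rmin (F p) (G p))).
  - apply sum_n_m_le. intros; apply Rmin_r.
  - intros p Hp. rewrite Rmin_left; auto.
Qed.

Lemma sR_zero (F : nat -> R) (n m : nat) :
  (forall p, (n <= p <= m)%nat -> F p = 0) -> @eq R (sum_n_m F n m) 0.
Proof.
  intros H. rewrite (sum_n_m_ext_loc F (fun _ => zero)) by (intros; rewrite H; auto).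
  exact (@sum_n_m_const_zero R_AbelianMonoid n m).
Qed.

Lemma sum_geom3 (b : nat) : forall a, (a <= S b)%nat ->
  @eq R (sum_n_m (fun p => (/3) ^ p) a b) (((/3) ^ a - (/3) ^ (S b)) * (3 / 2)).
Proof.
  induction b as [|b IH]; intros a Ha.
  - destruct a as [|[|a]]; [|rewrite sR_empty by lia; ring|lia].
    rewrite sum_n_n. simpl. field.
  - destruct (Nat.eq_dec a (S (S b))) as [->|Hne].
    + rewrite sR_empty by lia. ring.
    + rewrite sR_nS, IH by lia. simpl. field.
Qed.

Lemma leading_term_bound (c : nat -> R) (a b : nat) : (a <= b)%nat ->
  (forall p, (a <= p <= b)%nat -> Rabs (c p) <= 1) -> Rabs (c a) = 1 ->
  ((/3) ^ a + (/3) ^ b) / 2 <= Rabs (sum_n_m (fun p => (/3) ^ p * c p) a b).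
Proof.
  intros Hab Hc Ha. rewrite sR_Sn by assumption.
  set (T := sum_n_m (fun p => (/3) ^ p * c p) (S a) b).
  assert (HT : Rabs T <= ((/3) ^ a - (/3) ^ b) / 2).
  { eapply Rle_trans; [apply sR_abs|].
    eapply Rle_trans; [apply (sR_le _ (fun p => (/3) ^ p))|].
    - intros p Hp. rewrite Rabs_mult, Rabs_pos_eq by (apply pow_le; lra).
      specialize (Hc p ltac:(lia)). assert (0 <= (/3) ^ p) by (apply pow_le; lra).
      assert ((/3) ^ p * Rabs (c p) <= (/3) ^ p * 1) by (apply Rmult_le_compat_l; lra). lra.
    - rewrite sum_geom3 by lia. simpl. right. field. }
  assert (Hlead : Rabs ((/3) ^ a * c a) = (/3) ^ a)
    by (rewrite Rabs_mult, Ha, Rabs_pos_eq by (apply pow_le; lra); ring).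
  assert (Tri := Rabs_triang ((/3) ^ a * c a + T) (- T)).
  rewrite Rabs_Ropp in Tri. replace ((/3) ^ a * c a + T + - T) with ((/3) ^ a * c a) in Tri by ring.
  lra.
Qed.

Lemma weighted_gap (d N p0 : nat) (c s : nat -> R) :
  (1 <= p0 <= d)%nat ->
  (forall p, (1 <= p <= d)%nat -> Rabs (c p) <= 1) ->
  (forall p, (1 <= p < p0)%nat -> c p = 0) -> Rabs (c p0) = 1 ->
  (forall p, (1 <= p <= d)%nat ->
     Rabs (s p - 2 * ((/3) ^ d) ^ N * c p) <= 2 * ((/3) ^ d) ^ S N / (1 - (/3) ^ d)) ->
  ((/3) ^ d) ^ N * (/3) ^ p0 <= Rabs (sum_n_m (fun p => (/3) ^ p * s p) 1 d).
Proof.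
  intros Hp0 Hc Hlow Hc0 Hs. set (q := (/3) ^ d) in *.
  assert (Hq : 0 <= q < 1) by (unfold q; apply pow_lt_1_compat; [lra|lia]).
  assert (HqN : 0 <= q ^ N) by (apply pow_le; lra).
  set (E := sum_n_m (fun p => (/3) ^ p * c p) 1 d).
  set (Err := sum_n_m (fun p => (/3) ^ p * (s p - 2 * q ^ N * c p)) 1 d).
  assert (Hsplit : sum_n_m (fun p => (/3) ^ p * s p) 1 d = 2 * q ^ N * E + Err).
  { unfold E, Err. rewrite <- sR_scal, <- sR_plus. apply sum_n_m_ext. intros; simpl; ring. }
  assert (HE : ((/3) ^ p0 + q) / 2 <= Rabs E).
  { unfold E. rewrite (sR_Chasles _ 1 (p0 - 1) d) by lia.
    rewrite (sR_zero _ 1 (p0 - 1)) by (intros p Hp; rewrite Hlow by lia; ring).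
    replace (S (p0 - 1)) with p0 by lia. rewrite Rplus_0_l.
    apply leading_term_bound; auto; [lia|]. intros p Hp. apply Hc. lia. }
  assert (HErr : Rabs Err <= q ^ S N).
  { eapply Rle_trans; [apply sR_abs|].
    eapply Rle_trans; [apply (sR_le _ (fun p => (2 * q ^ S N / (1 - q)) * (/3) ^ p))|].
    - intros p Hp. rewrite Rabs_mult, Rabs_pos_eq, Rmult_comm by (apply pow_le; lra).
      apply Rmult_le_compat_r; [apply pow_le; lra|]. apply Hs. assumption.
    - rewrite sR_scal, sum_geom3 by lia. right. unfold q. simpl. field.
      fold q. lra. }
  rewrite Hsplit.
  assert (Tri := Rabs_triang (2 * q ^ N * E + Err) (- Err)).
  rewrite Rabs_Ropp in Tri. replace (2 * q ^ N * E + Err + - Err) with (2 * q ^ N * E) in Tri by ring.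
  rewrite !Rabs_mult, (Rabs_pos_eq 2), (Rabs_pos_eq (q ^ N)) in Tri by lra.
  assert (q ^ N * (((/3) ^ p0 + q) / 2) <= q ^ N * Rabs E) by (apply Rmult_le_compat_l; lra).
  simpl in HErr. nra.
Qed.

Definition digit_diff (x y : nat -> R) (p j : nat) : R := bdigit (x p) j - bdigit (y p) j.

Lemma digit_diff_le1 (x y : nat -> R) (p j : nat) : Rabs (digit_diff x y p j) <= 1.
Proof.
  unfold digit_diff.
  destruct (bdigit_cases (x p) j) as [-> | ->], (bdigit_cases (y p) j) as [-> | ->].
  - rewrite Rminus_0_r, Rabs_R0. lra.
  - rewrite Rabs_left; lra.
  - rewrite Rminus_0_r, Rabs_R1. lra.
  - rewrite Rminus_diag, Rabs_R0. lra.
Qed.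

Lemma digit_diff_neq (x y : nat -> R) (p j : nat) :
  bdigit (x p) j <> bdigit (y p) j -> Rabs (digit_diff x y p j) = 1.
Proof.
  unfold digit_diff.
  destruct (bdigit_cases (x p) j) as [-> | ->], (bdigit_cases (y p) j) as [-> | ->];
    intros Hne; try (exfalso; apply Hne; reflexivity).
  - rewrite Rabs_left; lra.
  - rewrite Rminus_0_r. apply Rabs_R1.
Qed.

Section PhiGap.
Variable d : nat.
Hypothesis hd : (1 <= d)%nat.

Let q : R := (/3) ^ d.

Lemma q_bounds : 0 <= q < 1.
Proof. unfold q. split; [apply pow_le; lra|apply pow_lt_1_compat; [lra|lia]]. Qed.

Lemma ex_digit_series (u : nat -> R) :
  (forall n, Rabs (u n) <= 1) -> ex_series (fun n => 2 * u n * q ^ n).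
Proof.
  intros Hu. apply (dominated_series_bound _ 2 q q_bounds). intros n.
  assert (Hq := q_bounds). assert (0 <= q ^ n) by apply pow_le, Hq.
  rewrite !Rabs_mult, Rabs_pos_eq, (Rabs_pos_eq (q ^ n)) by lra.
  specialize (Hu n). nra.
Qed.

Lemma Phi_diff (x y : nat -> R) :
  Phi d x - Phi d y =
  sum_n_m (fun p => (/3) ^ p * Series (fun n => 2 * digit_diff x y p (S n) * q ^ n)) 1 d.
Proof.
  unfold Phi. rewrite <- sR_minus. apply sum_n_m_ext. intros p.
  assert (Ex : forall t, ex_series (fun n => 2 * bdigit t (S n) * q ^ n)).
  { intros t. apply ex_digit_series. intros n.
    destruct (bdigit_cases t (S n)) as [-> | ->]; rewrite ?Rabs_R0, ?Rabs_R1; lra. }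
  unfold phi. rewrite !(Series_ext (fun n => 2 * bdigit _ (S n) * (/3) ^ (d * n))
                                  (fun n => 2 * bdigit _ (S n) * q ^ n))
    by (intros; unfold q; rewrite pow_mult; reflexivity).
  rewrite (Series_ext (fun n => 2 * digit_diff x y p (S n) * q ^ n)
             (fun n => 2 * bdigit (x p) (S n) * q ^ n - 2 * bdigit (y p) (S n) * q ^ n))
    by (intros; unfold digit_diff; ring).
  rewrite Series_minus by auto. simpl. ring.
Qed.

Lemma Phi_gap (x y : nat -> R) (N p0 : nat) : (1 <= p0 <= d)%nat ->
  (forall p n, (1 <= p <= d)%nat -> (n < N)%nat -> bdigit (x p) (S n) = bdigit (y p) (S n)) ->
  (forall p, (1 <= p < p0)%nat -> bdigit (x p) (S N) = bdigit (y p) (S N)) ->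
  bdigit (x p0) (S N) <> bdigit (y p0) (S N) ->
  (/3) ^ (d * N + p0) <= Rabs (Phi d x - Phi d y).
Proof.
  intros Hp0 Hbelow Hleft Hne.
  rewrite Phi_diff, pow_add, pow_mult.
  apply (weighted_gap d N p0 (fun p => digit_diff x y p (S N))); auto.
  - intros p _. apply digit_diff_le1.
  - intros p Hp. unfold digit_diff. rewrite Hleft by assumption. ring.
  - apply digit_diff_neq, Hne.
  - intros p Hp. fold q.
    set (a := fun n => 2 * digit_diff x y p (S n) * q ^ n).
    replace (2 * q ^ N * digit_diff x y p (S N)) with (a N) by (unfold a; ring).
    apply (series_tail_bound q N q_bounds a 2).
    + intros n. unfold a. assert (Hq := q_bounds). assert (0 <= q ^ n) by apply pow_le, Hq.
      rewrite !Rabs_mult, Rabs_pos_eq, (Rabs_pos_eq (q ^ n)) by lra.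
      assert (Hu := digit_diff_le1 x y p (S n)). nra.
    + intros n Hn. unfold a, digit_diff. rewrite Hbelow by assumption. ring.
Qed.
End PhiGap.

Lemma least_witness (P : nat -> Prop) :
  (exists n, P n) -> exists m, P m /\ forall j, (j < m)%nat -> ~ P j.
Proof.
  intros Hex.
  destruct (dec_inh_nat_subset_has_unique_least_element P (fun n => classic (P n)) Hex)
    as [m [[Pm Hmin] _]].
  exists m. split; [assumption|]. intros j Hj Pj. specialize (Hmin j Pj). lia.
Qed.

Lemma first_difference (d k : nat) (x y : nat -> R) :
  ~ (forall p, (1 <= p <= d)%nat -> forall j, (1 <= j <= k)%nat ->
       bdigit (x p) j = bdigit (y p) j) ->
  exists N p0, (N < k)%nat /\ (1 <= p0 <= d)%nat /\
    (forall p n, (1 <= p <= d)%nat -> (n < N)%nat -> bdigit (x p) (S n) = bdigit (y p) (S n)) /\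
    (forall p, (1 <= p < p0)%nat -> bdigit (x p) (S N) = bdigit (y p) (S N)) /\
    bdigit (x p0) (S N) <> bdigit (y p0) (S N).
Proof.
  intros Hne.
  set (Level := fun n => exists p, (1 <= p <= d)%nat /\ bdigit (x p) (S n) <> bdigit (y p) (S n)).
  assert (Hex : exists n, (n < k)%nat /\ Level n).
  { apply NNPP. intros C. apply Hne. intros p Hp j Hj. apply NNPP. intros Hd.
    apply C. exists (j - 1)%nat. split; [lia|].
    exists p. replace (S (j - 1)) with j by lia. auto. }
  assert (HexL : exists n, Level n) by (destruct Hex as [n [_ Hn]]; exists n; exact Hn).
  destruct (least_witness Level HexL) as [N [[p1 [Hp1 Hd1]] HNmin]].
  assert (HNk : (N < k)%nat).
  { destruct Hex as [n [Hn HLn]]. destruct (Nat.lt_ge_cases n N) as [Hlt|Hge]; [|lia].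
    exfalso. exact (HNmin n Hlt HLn). }
  destruct (least_witness (fun p => (1 <= p <= d)%nat /\ bdigit (x p) (S N) <> bdigit (y p) (S N)))
    as [p0 [[Hp0 Hd0] Hp0min]]; [exists p1; auto|].
  exists N, p0. repeat split; try lia; try assumption.
  - intros p n Hp Hn. apply NNPP. intros Hd. apply (HNmin n Hn). exists p. auto.
  - intros p Hp. apply NNPP. intros Hd. apply (Hp0min p); [lia|]. split; [lia|assumption].
Qed.

Lemma ternary_gap_scale (m M : nat) (g : R) : (M <= m)%nat -> (/3) ^ M <= g -> 1 <= 3 ^ m * g.
Proof.
  rewrite pow_inv. intros HMm Hg.
  assert (P : 0 < 3 ^ M) by (apply pow_lt; lra).
  assert (Mono : 3 ^ M <= 3 ^ m) by (apply Rle_pow; [lra|assumption]).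
  apply Rle_trans with (3 ^ M * / 3 ^ M); [rewrite Rinv_r; lra|].
  apply Rmult_le_compat; [lra|left; apply Rinv_0_lt_compat, P|assumption|assumption].
Qed.

Theorem lemma3 (d k : nat) (hd : (2 <= d)%nat) (hk : (1 <= k)%nat)
  (f : (nat -> R) -> R) (hf : piecewise_const_dyadic d k f) :
  forall x y : nat -> R, in_cube d x -> in_cube d y ->
    Rabs (f x - f y) <= 2 * sup_norm d f * 3 ^ (k * d) * Rabs (Phi d x - Phi d y).
Proof.
  intros x y hx hy.
  assert (Hbound := piecewise_const_bounded d k f hf).
  assert (Hnorm : 0 <= sup_norm d f) by (eapply Rle_trans; [apply Rabs_pos|apply Hbound, hx]).
  assert (Hpow : 0 <= 3 ^ (k * d)) by (apply pow_le; lra).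
  destruct (classic (forall p, (1 <= p <= d)%nat -> forall j, (1 <= j <= k)%nat ->
                       bdigit (x p) j = bdigit (y p) j)) as [Hsame|Hne].
  -
    rewrite (same_digits_same_value d k f hf x y hx hy Hsame), Rminus_diag, Rabs_R0.
    apply Rmult_le_pos; [apply Rmult_le_pos; lra|apply Rabs_pos].
  -
    destruct (first_difference d k x y Hne) as (N & p0 & HNk & Hp0 & Hbelow & Hleft & Hdiff).
    assert (Gap := Phi_gap d ltac:(lia) x y N p0 Hp0 Hbelow Hleft Hdiff).
    assert (Scale := ternary_gap_scale (k * d) (d * N + p0) _ ltac:(nia) Gap).
    assert (Tri : Rabs (f x - f y) <= 2 * sup_norm d f).
    { unfold Rminus. eapply Rle_trans; [apply Rabs_triang|]. rewrite Rabs_Ropp.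
      assert (Hx := Hbound x hx). assert (Hy := Hbound y hy). lra. }
    rewrite Rmult_assoc. nra.
Qed.
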